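(* Let $m\ge 1$ and let $f_i(z)=a_iz+b_i$, $i=1,\dots,m$, with $a_i,b_i\in\mathbb{C}$ and $0<|a_i|<1$, and let $K\subset\mathbb{C}$ be the attractor of the iterated function system $\{f_1,\dots,f_m\}$. Suppose $K$ is not a singleton. If an eventually periodic word $i_1i_2\cdots i_l(j_1\cdots j_k)^\infty\in\{1,\dots,m\}^{\mathbb{N}}$ is a coding of an extreme point of the convex hull $\mathrm{co}(K)$, then $a_{j_1}a_{j_2}\cdots a_{j_k}$ is a positive real number.
   Context: The attractor $K$ is the unique nonempty compact set with $K=\bigcup_{i=1}^m f_i(K)$. For a word $i_1i_2\cdots$ write $f_{i_1\cdots i_n}=f_{i_1}\circ\cdots\circ f_{i_n}$. If $\bigcap_{n\ge1} f_{i_1\cdots i_n}(K)=\{z\}$, the infinite word $i_1i_2\cdots$ is called a coding of the point $z\in K$. The notation $(j_1\cdots j_k)^\infty$ denotes infinite repetition of the block $j_1\cdots j_k$. *)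

From Stdlib Require Import Reals List.
From Coquelicot Require Import Coquelicot.
Open Scope R_scope.

Definition compactC (K : C -> Prop) : Prop :=
  forall (I : Type) (U : I -> C -> Prop),
    (forall i, @open C_UniformSpace (U i)) ->
    (forall z, K z -> exists i, U i z) ->
    exists l : list I, forall z, K z -> exists i, In i l /\ U i z.

Definition ifs_map (a b : nat -> C) (i : nat) (z : C) : C :=
  Cplus (Cmult (a i) z) (b i).

Definition is_attractor (m : nat) (a b : nat -> C) (K : C -> Prop) : Prop :=
  (exists z, K z) /\ compactC K /\
  (forall z, K z <-> exists i, (1 <= i <= m)%nat /\ exists x, K x /\ z = ifs_map a b i x).

(* f_{w_0 ... w_{n-1}} = f_{w_0} o ... o f_{w_{n-1}}
   (the word i_1 i_2 ... is represented by w with w (n-1) = i_n). *)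
Fixpoint word_comp (a b : nat -> C) (w : nat -> nat) (n : nat) (z : C) : C :=
  match n with
  | O => z
  | S n' => word_comp a b w n' (ifs_map a b (w n') z)
  end.

Definition is_coding (a b : nat -> C) (K : C -> Prop) (w : nat -> nat) (z : C) : Prop :=
  forall y, (forall n, (1 <= n)%nat -> exists x, K x /\ y = word_comp a b w n x) <-> y = z.

Definition convex_hull (K : C -> Prop) (z : C) : Prop :=
  exists (n : nat) (t : nat -> R) (p : nat -> C),
    (forall i, (i <= n)%nat -> 0 <= t i /\ K (p i)) /\
    sum_n t n = 1 /\
    z = sum_n (fun i => Cmult (RtoC (t i)) (p i)) n.

Definition extreme_point (S : C -> Prop) (z : C) : Prop :=
  S z /\
  forall (x y : C) (t : R), S x -> S y -> 0 < t < 1 ->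
    z = Cplus (Cmult (RtoC t) x) (Cmult (RtoC (1 - t)) y) -> x = y.

Fixpoint prod_block (a : nat -> C) (w : nat -> nat) (s k : nat) : C :=
  match k with
  | O => RtoC 1
  | S k' => Cmult (a (w s)) (prod_block a w (S s) k')
  end.

From Stdlib Require Import Reals List Lra Lia Classical.
From Coquelicot Require Import Coquelicot.
Open Scope R_scope.

(* Let [g = f_{i_1...i_l}] and [h = f_{j_1...j_k}]; [h] is a contraction with ratio
   [A = a_{j_1}...a_{j_k}] and a fixed point [p], and the coded point is [z = g p].  For
   [y] in [K] with [y <> p], the points [g (h^n y) = z + A^n d] (with [d <> 0]) lie in [K].
   If [A] were not a positive real, angle doubling gives a power [B = A^N] with
   [Re B <= 0].  As [B] is a root of [X^2 - 2 Re B X + |B|^2], whose coefficients are then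
   nonnegative, [z] is a proper convex combination of [z + d], [z + B d] and [z + B^2 d],
   contradicting extremality. *)

Definition shift_word (w : nat -> nat) (s : nat) : nat -> nat := fun i => w (s + i)%nat.

Definition periodic_word (v : nat -> nat) (k : nat) : Prop := forall i, v (k + i)%nat = v i.

Section Words.

Local Open Scope C_scope.
Variables (a b : nat -> C).

Lemma prod_block_S_r w s n :
  prod_block a w s (S n) = prod_block a w s n * a (w (s + n)%nat).
Proof.
  revert s; induction n as [|n IH]; intros s.
  - simpl. rewrite Nat.add_0_r. ring.
  - change (prod_block a w s (S (S n))) with (a (w s) * prod_block a w (S s) (S n)).
    change (prod_block a w s (S n)) with (a (w s) * prod_block a w (S s) n).
    rewrite IH. replace (S s + n)%nat with (s + S n)%nat by lia. ring.
Qed.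

Lemma prod_block_shift w s t n :
  prod_block a w (s + t) n = prod_block a (shift_word w s) t n.
Proof.
  revert t; induction n as [|n IH]; intros t; simpl; [reflexivity|].
  replace (S (s + t)) with (s + S t)%nat by lia. rewrite IH. reflexivity.
Qed.

Lemma word_comp_sub w n x y :
  word_comp a b w n x - word_comp a b w n y = prod_block a w 0 n * (x - y).
Proof.
  revert x y; induction n as [|n IH]; intros x y.
  - simpl. ring.
  - rewrite prod_block_S_r. simpl. rewrite IH. unfold ifs_map. ring.
Qed.

Lemma word_comp_affine w n x y :
  word_comp a b w n x = word_comp a b w n y + prod_block a w 0 n * (x - y).
Proof. rewrite <- word_comp_sub. ring. Qed.

Lemma word_comp_add w n r x :
  word_comp a b w (n + r) x = word_comp a b w n (word_comp a b (shift_word w n) r x).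
Proof.
  revert x; induction r as [|r IH]; intros x.
  - rewrite Nat.add_0_r. reflexivity.
  - rewrite Nat.add_succ_r. simpl. rewrite IH. reflexivity.
Qed.

Lemma word_comp_ext w v n x :
  (forall i, w i = v i) -> word_comp a b w n x = word_comp a b v n x.
Proof.
  intros Hwv; revert x; induction n as [|n IH]; intros x; simpl; [reflexivity|].
  rewrite IH, Hwv. reflexivity.
Qed.

Lemma word_comp_periodic v k n x :
  periodic_word v k -> word_comp a b v (n * k) x = Nat.iter n (word_comp a b v k) x.
Proof.
  intros Hv; induction n as [|n IH]; [reflexivity|].
  change (S n * k)%nat with (k + n * k)%nat.
  rewrite word_comp_add, Nat.iter_succ, <- IH.
  f_equal. apply word_comp_ext, Hv.
Qed.

Lemma Cmod_prod_block_pos w s n :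
  (forall i, 0 < Cmod (a (w i)))%R -> (0 < Cmod (prod_block a w s n))%R.
Proof.
  intros Hwa; revert s; induction n as [|n IH]; intros s; simpl.
  - rewrite Cmod_1. lra.
  - rewrite Cmod_mult. apply Rmult_lt_0_compat; auto.
Qed.

Lemma Cmod_prod_block_le_1 w s n :
  (forall i, Cmod (a (w i)) <= 1)%R -> (Cmod (prod_block a w s n) <= 1)%R.
Proof.
  intros Hwa; revert s; induction n as [|n IH]; intros s; simpl.
  - rewrite Cmod_1. lra.
  - rewrite Cmod_mult. pose proof (Hwa s). pose proof (IH (S s)).
    pose proof (Cmod_ge_0 (a (w s))). pose proof (Cmod_ge_0 (prod_block a w (S s) n)). nra.
Qed.

Lemma Cmod_prod_block_lt_1 w s n :
  (forall i, 0 < Cmod (a (w i)) < 1)%R -> (1 <= n)%nat -> (Cmod (prod_block a w s n) < 1)%R.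
Proof.
  intros Hwa Hn. destruct n as [|n]; [lia|]. simpl. rewrite Cmod_mult.
  pose proof (Hwa s).
  assert (Cmod (prod_block a w (S s) n) <= 1)%R
    by (apply Cmod_prod_block_le_1; intros i; pose proof (Hwa i); lra).
  pose proof (Cmod_ge_0 (prod_block a w (S s) n)). nra.
Qed.

End Words.

Lemma attractor_ifs_map m a b K i x :
  is_attractor m a b K -> (1 <= i <= m)%nat -> K x -> K (ifs_map a b i x).
Proof. intros [_ [_ HK]] Hi Hx. apply HK. exists i. split; [exact Hi|]. exists x; auto. Qed.

Lemma word_comp_attractor m a b K w n x :
  is_attractor m a b K -> (forall i, (1 <= w i <= m)%nat) -> K x -> K (word_comp a b w n x).
Proof.
  intros HK Hw; revert x; induction n as [|n IH]; intros x Hx; simpl; [exact Hx|].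
  apply IH, (attractor_ifs_map m); auto.
Qed.

Lemma not_singleton_exists_neq (K : C -> Prop) (p : C) :
  (exists y, K y) -> ~ (exists z0, forall y, K y <-> y = z0) -> exists y, K y /\ y <> p.
Proof.
  intros [y0 Hy0] Hns. apply NNPP; intros Hall. apply Hns. exists p.
  assert (Heq : forall y, K y -> y = p).
  { intros y Hy. apply NNPP; intros Hne. apply Hall. exists y; auto. }
  intros y; split; [apply Heq|]. intros ->. rewrite <- (Heq y0 Hy0). exact Hy0.
Qed.

Section AffineIteration.

Local Open Scope C_scope.
Variables (F : C -> C) (r : C).
Hypothesis F_sub : forall x y, F x - F y = r * (x - y).

Lemma affine_fixed_point : r <> 1 -> exists p, F p = p.
Proof.
  intros Hr. assert (H1r : 1 - r <> 0).
  { intros E. apply Hr. replace r with (1 - (1 - r)) by ring. rewrite E. ring. }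
  exists (F 0 / (1 - r)).
  replace (F (F 0 / (1 - r))) with (F (F 0 / (1 - r)) - F 0 + F 0) by ring.
  rewrite F_sub. field. exact H1r.
Qed.

Lemma iter_affine_fixed n p y : F p = p -> Nat.iter n F y = p + r ^ n * (y - p).
Proof.
  intros Hp. induction n as [|n IH]; simpl.
  - ring.
  - replace (F (Nat.iter n F y)) with (F (Nat.iter n F y) - F p + p) by (rewrite Hp; ring).
    rewrite F_sub, IH. ring.
Qed.

End AffineIteration.

Lemma open_Cmod_lt (r : R) : @open C_UniformSpace (fun y => Cmod y < r).
Proof.
  intros y Hy.
  assert (He : 0 < (r - Cmod y) / sqrt 2)
    by (apply Rdiv_lt_0_compat; [lra | apply sqrt_lt_R0; lra]).
  exists (mkposreal _ He). intros x Hx.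
  pose proof (C_NormedModule_mixin_compat2 y x (mkposreal _ He) Hx) as Hxy; simpl in Hxy.
  replace (sqrt 2 * ((r - Cmod y) / sqrt 2)) with (r - Cmod y) in Hxy
    by (field; apply Rgt_not_eq, sqrt_lt_R0; lra).
  pose proof (Cmod_triangle (Cminus x y) y) as Htri.
  change C in x, y.
  replace (Cplus (Cminus x y) y) with x in Htri by ring.
  change (minus x y) with (Cminus x y) in Hxy.
  lra.
Qed.

Lemma compactC_bounded (K : C -> Prop) : compactC K -> exists M, forall x, K x -> Cmod x <= M.
Proof.
  intros HK.
  destruct (HK nat (fun n y => Cmod y < INR n) (fun n => open_Cmod_lt _)) as [l Hl].
  - intros y _. destruct (INR_unbounded (Cmod y)) as [n Hn]. exists n. lra.
  - exists (INR (list_max l)). intros x Hx. destruct (Hl x Hx) as [i [Hi Hxi]].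
    assert (Hil : (i <= list_max l)%nat)
      by exact (proj1 (Forall_forall _ l) (proj1 (list_max_le l _) (Nat.le_refl _)) i Hi).
    apply le_INR in Hil. lra.
Qed.

Lemma Cmod_le_geometric_eq_0 (u : C) (c r : R) :
  0 <= r < 1 -> (forall n, (1 <= n)%nat -> Cmod u <= c * r ^ n) -> u = 0.
Proof.
  intros Hr Hu. apply NNPP; intros Hne.
  apply Cmod_gt_0 in Hne.
  destruct (pow_lt_1_zero r ltac:(rewrite Rabs_pos_eq; lra) (Cmod u / (Rabs c + 1)))
    as [N HN]; [apply Rdiv_lt_0_compat; pose proof (Rabs_pos c); lra|].
  specialize (HN (Nat.max N 1) ltac:(lia)).
  specialize (Hu (Nat.max N 1) ltac:(lia)).
  set (q := r ^ Nat.max N 1) in *.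
  assert (Hq : 0 <= q) by (apply pow_le; lra).
  rewrite Rabs_pos_eq in HN by exact Hq.
  apply (Rmult_lt_compat_r (Rabs c + 1)) in HN; [|pose proof (Rabs_pos c); lra].
  unfold Rdiv in HN. rewrite Rmult_assoc, Rinv_l in HN by (pose proof (Rabs_pos c); lra).
  pose proof (Rle_abs c). pose proof (Rabs_pos c). nra.
Qed.

(* [c j] stands for [cos (2^j theta)]: while [c j > 0], [1 - c j] at least doubles. *)
Lemma doubling_pos_eq_1 (c : nat -> R) :
  (forall j, c (S j) = 2 * c j ^ 2 - 1) -> (forall j, 0 < c j <= 1) -> c 0%nat = 1.
Proof.
  intros Hrec Hc. apply NNPP; intros Hne.
  assert (Hc0 : 0 < 1 - c 0%nat) by (pose proof (Hc 0%nat); lra).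
  assert (Hgrow : forall j, (1 - c j) * (1 / 2) ^ j >= 1 - c 0%nat).
  { induction j as [|j IH]; [simpl; lra|].
    rewrite Hrec. simpl pow. destruct (Hc j).
    assert (0 < (1 / 2) ^ j) by (apply pow_lt; lra). nra. }
  destruct (pow_lt_1_zero (1 / 2) ltac:(rewrite Rabs_pos_eq; lra) _ Hc0) as [N HN].
  specialize (HN N (le_n N)). rewrite Rabs_pos_eq in HN by (apply pow_le; lra).
  specialize (Hgrow N). destruct (Hc N).
  assert (0 < (1 / 2) ^ N) by (apply pow_lt; lra). nra.
Qed.

Lemma Re_Cmult_self (x : C) : Re (x * x)%C = Re x ^ 2 - Im x ^ 2.
Proof. destruct x as [x1 x2]; unfold Re, Im; simpl. ring. Qed.

Lemma exists_pow_Re_nonpos (A : C) :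
  A <> 0 -> ~ (Im A = 0 /\ 0 < Re A) -> exists N, Re (A ^ N)%C <= 0.
Proof.
  intros HA HnA. apply NNPP; intros Hall.
  assert (Hpos : forall N, 0 < Re (A ^ N)%C).
  { intros N. apply Rnot_le_lt. intros H. apply Hall. exists N; exact H. }
  set (B := fun j => (A ^ (2 ^ j))%C).
  set (c := fun j => Re (B j) / Cmod (B j)).
  assert (HB : forall j, 0 < Cmod (B j)) by (intros j; apply Cmod_gt_0, Cpow_nz, HA).
  assert (HBS : forall j, B (S j) = (B j * B j)%C).
  { intros j. unfold B. rewrite <- Cpow_add_r. f_equal. simpl. lia. }
  assert (Hc1 : c 0%nat = 1).
  { apply doubling_pos_eq_1.
    - intros j. unfold c. rewrite HBS, Re_Cmult_self, Cmod_mult.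
      pose proof (Cmod2_alt (B j)). pose proof (HB j).
      apply Rmult_eq_reg_r with (Cmod (B j) ^ 2); [|apply pow_nonzero; lra].
      field_simplify; lra.
    - intros j. unfold c. pose proof (HB j). pose proof (Hpos (2 ^ j)%nat).
      pose proof (re_le_Cmod (B j)). pose proof (Rle_abs (Re (B j))).
      split; [apply Rdiv_lt_0_compat; assumption|].
      apply Rmult_le_reg_r with (Cmod (B j)); [assumption|].
      field_simplify; lra. }
  apply HnA. unfold c, B in Hc1. simpl pow in Hc1. rewrite Cpow_1_r in Hc1.
  pose proof (Cmod2_alt A). pose proof (Hpos 1%nat) as HRe. rewrite Cpow_1_r in HRe.
  assert (HReA : Re A = Cmod A).
  { pose proof (proj1 (Cmod_gt_0 A) HA).
    replace (Re A) with (Re A / Cmod A * Cmod A) by (field; lra).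
    rewrite Hc1. ring. }
  split; [|exact HRe]. rewrite HReA in *. apply Rsqr_0_uniq. unfold Rsqr. nra.
Qed.

Lemma convex_hull_of_mem (K : C -> Prop) x : K x -> convex_hull K x.
Proof.
  intros Hx. exists 0%nat, (fun _ => 1), (fun _ => x). split; [|split].
  - intros i _. split; [lra | exact Hx].
  - rewrite sum_O. reflexivity.
  - rewrite sum_O. apply injective_projections; destruct x; simpl; ring.
Qed.

Lemma convex_hull_segment (K : C -> Prop) x y s :
  K x -> K y -> 0 <= s <= 1 ->
  convex_hull K (Cplus (Cmult (RtoC s) x) (Cmult (RtoC (1 - s)) y)).
Proof.
  intros Hx Hy Hs.
  exists 1%nat, (fun i => match i with O => s | _ => 1 - s end),
    (fun i => match i with O => x | _ => y end).
  split; [|split].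
  - intros [|i] _; split; auto; lra.
  - rewrite sum_Sn, sum_O. simpl. unfold plus; simpl. ring.
  - rewrite sum_Sn, sum_O. reflexivity.
Qed.

Lemma extreme_point_geometric_triple (K : C -> Prop) (z d B : C) :
  extreme_point (convex_hull K) z ->
  K (z + d)%C -> K (z + B * d)%C -> K (z + B * B * d)%C ->
  B <> 0 -> Re B <= 0 -> d = 0.
Proof.
  intros [_ Hext] H0 H1 H2 HB HReB.
  set (mu := Re B ^ 2 + Im B ^ 2).
  assert (Hmu : 0 < mu) by (unfold mu; rewrite <- Cmod2_alt; apply pow_lt, Cmod_gt_0, HB).
  set (ga := -2 * Re B).
  set (s := ga / (ga + 1)).
  set (t := mu / (mu + ga + 1)).
  set (Y := Cplus (Cmult (RtoC s) (z + B * d)%C) (Cmult (RtoC (1 - s)) (z + B * B * d)%C)).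
  assert (HY : convex_hull K Y).
  { apply convex_hull_segment; [exact H1 | exact H2|].
    unfold s, ga. split; [apply Rdiv_le_0_compat; lra|].
    apply Rmult_le_reg_r with (-2 * Re B + 1); [lra|].
    field_simplify; lra. }
  assert (Ht : 0 < t < 1).
  { unfold t, ga. split; [apply Rdiv_lt_0_compat; lra|].
    apply Rmult_lt_reg_r with (mu + -2 * Re B + 1); [lra|].
    field_simplify; lra. }
  assert (Hz : z = Cplus (Cmult (RtoC t) (z + d)%C) (Cmult (RtoC (1 - t)) Y)).
  { unfold Y, t, s, mu, ga in *.
    destruct z as [z1 z2], d as [d1 d2], B as [b1 b2]. unfold Re, Im in *. simpl in *.
    apply injective_projections; simpl; field; lra. }
  pose proof (Hext _ _ _ (convex_hull_of_mem K _ H0) HY Ht Hz) as EY.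
  rewrite <- EY in Hz.
  replace d with ((z + d) - z)%C by ring.
  rewrite Hz at 2. apply injective_projections; simpl; ring.
Qed.

Lemma coding_periodic_point a b K w l k z p M :
  is_coding a b K w z -> (forall x, K x -> Cmod x <= M) ->
  (forall i, 0 < Cmod (a (w i)) < 1) -> (1 <= k)%nat -> periodic_word (shift_word w l) k ->
  word_comp a b (shift_word w l) k p = p -> z = word_comp a b w l p.
Proof.
  intros Hcod HM Hwa Hk Hv Hp.
  set (h := word_comp a b (shift_word w l) k) in *.
  set (A := prod_block a (shift_word w l) 0 k).
  assert (Hh : forall x y, (h x - h y = A * (x - y))%C) by (intros; apply word_comp_sub).
  assert (HA : Cmod A < 1)
    by (apply Cmod_prod_block_lt_1; [intros i; apply Hwa | exact Hk]).
  enough (E : (z - word_comp a b w l p)%C = 0).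
  { replace z with (z - word_comp a b w l p + word_comp a b w l p)%C by ring.
    rewrite E. ring. }
  apply (Cmod_le_geometric_eq_0 _ (Cmod (prod_block a w 0 l) * (M + Cmod p)) (Cmod A)).
  { split; [apply Cmod_ge_0 | exact HA]. }
  intros N HN.
  destruct (proj2 (Hcod z) eq_refl (l + N * k)%nat ltac:(nia)) as [x [Hx ->]].
  rewrite word_comp_add, word_comp_periodic by exact Hv. fold h.
  rewrite word_comp_sub, (iter_affine_fixed h A Hh N p x Hp).
  replace (p + A ^ N * (x - p) - p)%C with (A ^ N * (x - p))%C by ring.
  rewrite !Cmod_mult, Cmod_pow.
  rewrite Rmult_assoc, (Rmult_comm (M + Cmod p)).
  apply Rmult_le_compat_l; [apply Cmod_ge_0|].
  apply Rmult_le_compat_l; [apply pow_le, Cmod_ge_0|].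
  unfold Cminus. pose proof (Cmod_triangle x (- p)%C) as Htri. rewrite Cmod_opp in Htri.
  pose proof (HM x Hx). lra.
Qed.

Lemma eventually_periodic_coding_orbit m a b K w l k z :
  is_attractor m a b K -> ~ (exists z0, forall y, K y <-> y = z0) ->
  (forall n, (1 <= w n <= m)%nat) -> (forall i, 0 < Cmod (a (w i)) < 1) ->
  (1 <= k)%nat -> periodic_word (shift_word w l) k -> is_coding a b K w z ->
  exists d : C, d <> 0 /\ forall n, K (z + prod_block a w l k ^ n * d)%C.
Proof.
  intros Hatt Hns Hw Hwa Hk Hv Hcod.
  set (h := word_comp a b (shift_word w l) k).
  set (A := prod_block a w l k).
  assert (HA : A = prod_block a (shift_word w l) 0 k).
  { pose proof (prod_block_shift a w l 0 k) as E. rewrite Nat.add_0_r in E. exact E. }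
  assert (Hh : forall x y, (h x - h y = A * (x - y))%C)
    by (intros; rewrite HA; apply word_comp_sub).
  assert (HA1 : Cmod A < 1)
    by (rewrite HA; apply Cmod_prod_block_lt_1; [intros i; apply Hwa | exact Hk]).
  destruct (affine_fixed_point h A Hh) as [p Hp].
  { intros E. rewrite E, Cmod_1 in HA1. lra. }
  pose proof Hatt as [Hne [Hcomp _]].
  destruct (compactC_bounded K Hcomp) as [M HM].
  assert (Hz : z = word_comp a b w l p) by (eapply coding_periodic_point; eauto).
  destruct (not_singleton_exists_neq K p Hne Hns) as [y [Hy Hyp]].
  exists (prod_block a w 0 l * (y - p))%C. split.
  - apply Cmod_gt_0. rewrite Cmod_mult.
    apply Rmult_lt_0_compat; [apply Cmod_prod_block_pos; intros i; apply Hwa|].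
    apply Cmod_gt_0. intros E. apply Hyp.
    replace y with (y - p + p)%C by ring. rewrite E. ring.
  - intros n.
    assert (HK : K (word_comp a b w l (Nat.iter n h y))).
    { apply (word_comp_attractor m a b K w l _ Hatt Hw).
      apply Nat.iter_invariant; [|exact Hy].
      intros x Hx. apply (word_comp_attractor m a b K _ k x Hatt); [intros i; apply Hw | exact Hx]. }
    rewrite (iter_affine_fixed h A Hh n p y Hp), (word_comp_affine a b w l _ p), <- Hz in HK.
    replace (z + A ^ n * (prod_block a w 0 l * (y - p)))%C
      with (z + prod_block a w 0 l * (p + A ^ n * (y - p) - p))%C by ring.
    exact HK.
Qed.

Theorem theorem1p1 (m : nat) (a b : nat -> C) (K : C -> Prop)
  (w : nat -> nat) (l k : nat) (z : C) :
  (1 <= m)%nat ->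
  (forall i, (1 <= i <= m)%nat -> 0 < Cmod (a i) < 1) ->
  is_attractor m a b K ->
  ~ (exists z0, forall y, K y <-> y = z0) ->
  (forall n, (1 <= w n <= m)%nat) ->
  (1 <= k)%nat ->
  (forall n, w (l + n + k)%nat = w (l + n)%nat) ->
  is_coding a b K w z ->
  extreme_point (convex_hull K) z ->
  Im (prod_block a w l k) = 0 /\ 0 < Re (prod_block a w l k).
Proof.
  intros _ Ha Hatt Hns Hw Hk Hper Hcod Hext.
  assert (Hwa : forall i, 0 < Cmod (a (w i)) < 1) by (intros i; apply Ha, Hw).
  assert (Hv : periodic_word (shift_word w l) k).
  { intros i. unfold shift_word. replace (l + (k + i))%nat with (l + i + k)%nat by lia.
    apply Hper. }
  destruct (eventually_periodic_coding_orbit m a b K w l k z Hatt Hns Hw Hwa Hk Hv Hcod)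
    as [d [Hd Horbit]].
  set (A := prod_block a w l k) in *.
  assert (HA : A <> 0)
    by (apply Cmod_gt_0, Cmod_prod_block_pos; intros i; apply Hwa).
  apply NNPP; intros Hnot.
  destruct (exists_pow_Re_nonpos A HA Hnot) as [N HN].
  apply Hd, (extreme_point_geometric_triple K z d (A ^ N)); auto using Cpow_nz.
  - replace (z + d)%C with (z + A ^ 0 * d)%C by (simpl; ring). apply Horbit.
  - rewrite <- Cpow_add_r. apply Horbit.
Qed.
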